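(* Let $m,d,R\ge1$ be integers, $0<\lambda<\sigma<1$, $L_A,L_C,L_Z\ge0$, $\eta^0>0$, $c^*\ge0$, $D\ge0$, and let $\omega\in[0,\bar\omega(\sigma))$ where $\bar\omega(\sigma)=\frac{\sigma}{R}\cdot\frac{\sigma-\lambda}{\sigma-\lambda+2L_AL_Z[R\psi]^2}$ and $\psi=\max\{1,(2L_C)^{R-1}\}$. Define $$V_0=\max\{c^*,D\}+\frac{L_A\psi\sqrt{md}\,R^2\eta^0}{\sigma-\lambda}\cdot\frac{1+\frac{R\omega}{\sigma}[(1+L_C\sigma)\psi-1]}{1-\omega/\bar\omega(\sigma)},$$ $F^0=0$ and, for $s\in[R]$, $$F^s=\frac{\sqrt{md}\,\eta^0(1+L_C\sigma)+2L_ZV_0}{\sigma-\omega}\sum_{s'=0}^{s-1}\Big(\frac{2L_C}{1-\omega/\sigma}\Big)^{s'}.$$ Let $\tilde L_A=L_A\sum_{s=0}^{R-1}L_C^s$ and $\mathbf F=(F^1,\dots,F^R)$. Then $$V_0\ge\max\Big\{D,\ \frac{\sqrt{md}\,R\eta^0+\omega\sum_{s=1}^RF^s}{\sigma-\lambda}\,\tilde L_A\Big\},$$ and for every $s\in[R]$, $$F^s\ge\max\Big\{L_Zc^*+L_C\sqrt{md}\,\eta^0+L_C(1+\omega)F^{s-1},\ \frac{\sqrt{md}\,\eta^0(1+L_C\sigma)+L_C\sigma(1+\omega)F^{s-1}+L_Z(1+\sigma)V_0}{\sigma-\omega}\Big\}.$$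
   Context: All quantities are real numbers; $[R]=\{1,\dots,R\}$. Note that $\omega<\bar\omega(\sigma)\le\sigma/R$. *)

From Stdlib Require Import Reals Lra Lia.
Open Scope R_scope.

Fixpoint rsum (n : nat) (f : nat -> R) : R :=
  match n with
  | O => 0
  | S n' => rsum n' f + f n'
  end.

Definition psi (LC : R) (Rn : nat) : R := Rmax 1 ((2 * LC) ^ (Rn - 1)).

Definition omega_bar (Rn : nat) (lam sig LA LC LZ : R) : R :=
  sig / INR Rn * ((sig - lam) / (sig - lam + 2 * LA * LZ * (INR Rn * psi LC Rn) ^ 2)).

Definition V0 (m d Rn : nat) (lam sig LA LC LZ eta0 cstar D omega : R) : R :=
  Rmax cstar D
  + (LA * psi LC Rn * sqrt (INR m * INR d) * (INR Rn) ^ 2 * eta0 / (sig - lam))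
    * ((1 + INR Rn * omega / sig * ((1 + LC * sig) * psi LC Rn - 1))
       / (1 - omega / omega_bar Rn lam sig LA LC LZ)).

Definition Fs (m d Rn : nat) (lam sig LA LC LZ eta0 cstar D omega : R) (s : nat) : R :=
  match s with
  | O => 0
  | S _ =>
    (sqrt (INR m * INR d) * eta0 * (1 + LC * sig)
       + 2 * LZ * V0 m d Rn lam sig LA LC LZ eta0 cstar D omega) / (sig - omega)
    * rsum s (fun k => (2 * LC / (1 - omega / sig)) ^ k)
  end.

Definition LAtilde (LA LC : R) (Rn : nat) : R := LA * rsum Rn (fun s => LC ^ s).

From Stdlib Require Import Reals Lra Lia.
Open Scope R_scope.

(* Write a = sqrt(md) eta0, x = omega/sigma, t = R x,
   u = L_A/(sigma-lambda) and z = 2 u L_Z (R psi)^2, so that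
   omega/omega_bar = t (1+z) < 1.  Then
   - F^s = K * sum_{k<s} r^k with r = 2 L_C/(1-x) and K (sigma-omega) = W,
     W = a(1+L_C sigma) + 2 L_Z V0; hence F^{s+1} = K + r F^s, and both
     lower bounds on F^s follow from K >= L_Z c* + L_C a and
     r (sigma-omega) = 2 L_C sigma;
   - by Bernoulli's inequality r^k <= psi (1-x)/(1-t) for k < R, which bounds
     omega * sum_s F^s by t R psi W/(1-t); together with tilde L_A <= L_A R psi
     the bound on V0 reduces to u R psi (a R + t R psi W/(1-t)) <= V0.  The
     left side is affine in V0 with slope t z/(1-t) < 1, and V0 = max{c*,D} + E
     where E is precisely its fixed point, which gives the inequality. *)

Lemma rsum_le n f g :
  (forall k, (k < n)%nat -> f k <= g k) -> rsum n f <= rsum n g.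
Proof.
  induction n as [|n IH]; simpl; intros Hfg; [lra|].
  pose proof (Hfg n ltac:(lia)).
  pose proof (IH ltac:(intros; apply Hfg; lia)).
  lra.
Qed.

Lemma rsum_nonneg n f : (forall k, 0 <= f k) -> 0 <= rsum n f.
Proof.
  intros Hf; induction n as [|n IH]; simpl; [lra|].
  pose proof (Hf n); lra.
Qed.

Lemma rsum_const n c : rsum n (fun _ => c) = INR n * c.
Proof.
  induction n as [|n IH]; simpl rsum; [simpl; ring|].
  rewrite IH, S_INR; ring.
Qed.

Lemma rsum_le_more_terms n n' f :
  (forall k, 0 <= f k) -> (n <= n')%nat -> rsum n f <= rsum n' f.
Proof.
  intros Hf Hn; induction Hn as [|n' _ IH]; simpl; [lra|].
  pose proof (Hf n'); lra.
Qed.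

Lemma rsum_geom_succ n r :
  rsum (S n) (fun k => r ^ k) = 1 + r * rsum n (fun k => r ^ k).
Proof.
  induction n as [|n IH]; [simpl; ring|].
  cbn [rsum] in *; rewrite IH at 1.
  replace (r ^ S n) with (r * r ^ n) by (simpl; ring); ring.
Qed.

Lemma bernoulli_pow n y : 0 <= y <= 1 -> 1 - INR n * y <= (1 - y) ^ n.
Proof.
  intros Hy; induction n as [|n IH]; [simpl; lra|].
  rewrite S_INR; simpl pow.
  pose proof (pos_INR n); nra.
Qed.

Lemma psi_ge_1 LC Rn : 1 <= psi LC Rn.
Proof. apply Rmax_l. Qed.

Lemma pow_le_psi LC Rn k : 0 <= LC -> (k < Rn)%nat -> (2 * LC) ^ k <= psi LC Rn.
Proof.
  intros HLC Hk; unfold psi.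
  destruct (Rle_dec (2 * LC) 1).
  - eapply Rle_trans; [|apply Rmax_l].
    rewrite <- (pow1 k); apply pow_incr; lra.
  - eapply Rle_trans; [|apply Rmax_r].
    apply Rle_pow; [lra | lia].
Qed.

Lemma LAtilde_le LA LC Rn :
  0 <= LA -> 0 <= LC -> LAtilde LA LC Rn <= LA * (INR Rn * psi LC Rn).
Proof.
  intros HLA HLC; unfold LAtilde.
  apply Rmult_le_compat_l; [exact HLA|].
  rewrite <- rsum_const; apply rsum_le; intros k Hk.
  eapply Rle_trans; [|apply (pow_le_psi LC Rn k HLC Hk)].
  apply pow_incr; lra.
Qed.

Lemma geom_sum_le_psi LC n y :
  0 <= LC -> 0 <= y -> INR n * y < 1 ->
  rsum n (fun k => (2 * LC / (1 - y)) ^ k)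
    <= INR n * (psi LC n * (1 - y) / (1 - INR n * y)).
Proof.
  intros HLC Hy Hny; rewrite <- rsum_const; apply rsum_le; intros k Hk.
  assert (Hn : 1 <= INR n) by (apply (le_INR 1); lia).
  assert (Hy1 : y < 1) by nra.
  assert (Hk1 : INR (S k) <= INR n) by (apply le_INR; lia).
  (* Bernoulli: (1-y)^(k+1) >= 1 - (k+1) y >= 1 - n y > 0. *)
  assert (Hbern : 1 - INR n * y <= (1 - y) ^ S k).
  { eapply Rle_trans; [|apply bernoulli_pow; lra]; nra. }
  assert (Hpow : (2 * LC / (1 - y)) ^ k * (1 - y) ^ S k = (2 * LC) ^ k * (1 - y)).
  { replace ((2 * LC / (1 - y)) ^ k * (1 - y) ^ S k)
      with ((2 * LC / (1 - y)) ^ k * (1 - y) ^ k * (1 - y)) by (simpl; ring).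
    rewrite <- Rpow_mult_distr.
    replace (2 * LC / (1 - y) * (1 - y)) with (2 * LC) by (field; lra); ring. }
  pose proof (pow_le_psi LC n k HLC Hk).
  assert (0 <= (2 * LC / (1 - y)) ^ k)
    by (apply pow_le; apply Rmult_le_pos; [lra | left; apply Rinv_0_lt_compat; lra]).
  apply (Rmult_le_reg_r (1 - INR n * y)); [lra|].
  replace (psi LC n * (1 - y) / (1 - INR n * y) * (1 - INR n * y))
    with (psi LC n * (1 - y)) by (field; lra).
  nra.
Qed.

Lemma affine_le_above_fixed_point beta M E :
  0 <= beta <= 1 -> 0 <= M -> E * (1 - beta) + beta * (M + E) <= M + E.
Proof. intros Hbeta HM; nra. Qed.

(* The hypotheses of the theorem, and the abbreviations of the proof idea:
   E is the excess of V0 over M = max{c*,D}, N the numerator in V0, and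
   W, K, r describe F^s = K sum_{k<s} r^k. *)
Section Lemma4_bounds.

Variables (m d Rn : nat) (lam sig LA LC LZ eta0 cstar D omega : R).
Hypotheses (HR : (1 <= Rn)%nat) (Hlam : 0 < lam) (Hlam_sig : lam < sig)
  (Hsig1 : sig < 1) (HLA : 0 <= LA) (HLC : 0 <= LC) (HLZ : 0 <= LZ)
  (Heta : 0 <= eta0) (Hcstar : 0 <= cstar) (HD : 0 <= D) (Homega : 0 <= omega)
  (Homega_bar : omega < omega_bar Rn lam sig LA LC LZ).

Let a := sqrt (INR m * INR d) * eta0.
Let Rr := INR Rn.
Let ps := psi LC Rn.
Let u := LA / (sig - lam).
Let x := omega / sig.
Let t := Rr * x.
Let z := 2 * u * LZ * (Rr * ps) ^ 2.
Let M := Rmax cstar D.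
Let N := 1 + t * (ps * (1 + LC * sig) - 1).
Let E := u * ps * a * Rr ^ 2 * N / (1 - t * (1 + z)).
Let V := V0 m d Rn lam sig LA LC LZ eta0 cstar D omega.
Let W := a * (1 + LC * sig) + 2 * LZ * V.
Let K := W / (sig - omega).
Let r := 2 * LC / (1 - x).
Let F := Fs m d Rn lam sig LA LC LZ eta0 cstar D omega.

Lemma a_nonneg : 0 <= a.
Proof. apply Rmult_le_pos; [apply sqrt_pos | exact Heta]. Qed.

Lemma u_nonneg : 0 <= u.
Proof. unfold u; apply Rmult_le_pos; [lra | left; apply Rinv_0_lt_compat; lra]. Qed.

Lemma z_nonneg : 0 <= z.
Proof.
  pose proof u_nonneg.
  unfold z; apply Rmult_le_pos; [|apply pow2_ge_0].
  apply Rmult_le_pos; [|exact HLZ]; lra.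
Qed.

Lemma omega_ratio : omega / omega_bar Rn lam sig LA LC LZ = t * (1 + z).
Proof.
  assert (HRr : 1 <= Rr) by (apply (le_INR 1); lia).
  assert (0 <= 2 * LA * LZ * (Rr * ps) ^ 2)
    by (apply Rmult_le_pos; [nra | apply pow2_ge_0]).
  unfold omega_bar, t, x, z, u; fold Rr ps.
  field; repeat split; lra.
Qed.

Lemma contraction : t * (1 + z) < 1.
Proof.
  rewrite <- omega_ratio.
  assert (Hpos : 0 < omega_bar Rn lam sig LA LC LZ) by lra.
  apply (Rmult_lt_reg_r _ _ _ Hpos).
  unfold Rdiv; rewrite Rmult_assoc, Rinv_l; lra.
Qed.

Lemma x_le_t_lt_1 : 0 <= x <= t /\ t < 1.
Proof.
  pose proof contraction; pose proof z_nonneg; assert (0 < sig) by lra.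
  assert (HRr : 1 <= Rr) by (apply (le_INR 1); lia).
  assert (0 <= x) by (unfold x; apply Rmult_le_pos; [lra | left; apply Rinv_0_lt_compat; lra]).
  unfold t in *; repeat split; nra.
Qed.

Lemma omega_lt_sig : omega < sig.
Proof.
  destruct x_le_t_lt_1 as [[_ Hxt] Ht].
  assert (0 < sig) by lra.
  assert (omega = x * sig) by (unfold x; field; lra).
  nra.
Qed.

Lemma V_split : V = M + E.
Proof.
  assert (0 < sig) by lra; pose proof contraction.
  assert (Ht : Rr * omega / sig = t) by (unfold t, x; field; lra).
  unfold V, V0; rewrite omega_ratio; fold Rr ps M; rewrite Ht.
  unfold E, N, u, a; field; lra.
Qed.

Lemma M_nonneg : 0 <= M.
Proof. unfold M; pose proof (Rmax_r cstar D); lra. Qed.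

Lemma M_le_V : M <= V.
Proof.
  rewrite V_split.
  pose proof contraction; pose proof a_nonneg; assert (1 <= ps) by apply psi_ge_1; pose proof u_nonneg.
  destruct x_le_t_lt_1 as [[Hx Hxt] Ht].
  assert (0 <= LC * sig) by (apply Rmult_le_pos; lra).
  assert (0 <= t * (ps * (1 + LC * sig) - 1)) by (apply Rmult_le_pos; nra).
  assert (0 <= u * ps * a * Rr ^ 2).
  { pose proof (pow2_ge_0 Rr).
    apply Rmult_le_pos; [apply Rmult_le_pos; [apply Rmult_le_pos|]|]; lra. }
  assert (0 <= E).
  { unfold E, N; apply Rmult_le_pos; [apply Rmult_le_pos; lra|].
    left; apply Rinv_0_lt_compat; lra. }
  lra.
Qed.

Lemma V_nonneg : 0 <= V.
Proof. pose proof M_le_V; pose proof M_nonneg; lra. Qed.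

Lemma W_nonneg : 0 <= W.
Proof.
  pose proof a_nonneg; pose proof V_nonneg.
  assert (0 <= LC * sig) by (apply Rmult_le_pos; lra).
  assert (0 <= LZ * V) by (apply Rmult_le_pos; lra).
  unfold W; nra.
Qed.

(* V0 dominates the fixed point of the affine map
   V |-> u R psi (a R + t R psi W(V)/(1-t)) = alpha + beta V, beta = t z/(1-t):
   that fixed point is exactly E = alpha/(1-beta). *)
Lemma V_dominates_fixed_point :
  u * Rr * ps * (a * Rr + t * Rr * ps * W / (1 - t)) <= V.
Proof.
  destruct x_le_t_lt_1 as [[Hx Hxt] Ht].
  pose proof contraction; pose proof z_nonneg; pose proof M_nonneg.
  assert (Haffine : u * Rr * ps * (a * Rr + t * Rr * ps * W / (1 - t))
                    = u * ps * a * Rr ^ 2 * N / (1 - t) + t * z / (1 - t) * V).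
  { unfold W, N, z; field; lra. }
  assert (Hfixed : u * ps * a * Rr ^ 2 * N / (1 - t) = E * (1 - t * z / (1 - t))).
  { unfold E; field; lra. }
  rewrite Haffine, Hfixed, V_split.
  apply affine_le_above_fixed_point; [split | assumption].
  - apply Rmult_le_pos; [nra | left; apply Rinv_0_lt_compat; lra].
  - apply (Rmult_le_reg_r (1 - t)); [lra|].
    unfold Rdiv; rewrite Rmult_assoc, Rinv_l; lra.
Qed.

Lemma F_closed_form n : F n = K * rsum n (fun k => r ^ k).
Proof. destruct n; [simpl; ring | reflexivity]. Qed.

Lemma K_mul : K * (sig - omega) = W.
Proof. pose proof omega_lt_sig; unfold K; field; lra. Qed.

Lemma r_mul : r * (sig - omega) = 2 * LC * sig.
Proof. pose proof omega_lt_sig; assert (0 < sig) by lra; unfold r, x; field; lra. Qed.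

Lemma K_nonneg : 0 <= K.
Proof.
  pose proof omega_lt_sig; pose proof W_nonneg.
  unfold K; apply Rmult_le_pos; [lra | left; apply Rinv_0_lt_compat; lra].
Qed.

Lemma r_nonneg : 0 <= r.
Proof.
  pose proof omega_lt_sig; assert (0 < sig) by lra.
  apply (Rmult_le_reg_r (sig - omega)); [lra|].
  rewrite r_mul, Rmult_0_l; apply Rmult_le_pos; [|lra]; lra.
Qed.

Lemma F_succ n : F (S n) = K + r * F n.
Proof. rewrite !F_closed_form, rsum_geom_succ; ring. Qed.

Lemma F_nonneg n : 0 <= F n.
Proof.
  rewrite F_closed_form; pose proof K_nonneg; pose proof r_nonneg.
  apply Rmult_le_pos; [assumption|].
  apply rsum_nonneg; intros k; apply pow_le; assumption.
Qed.

Lemma F_succ_ge_first n :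
  LZ * cstar + LC * a + LC * (1 + omega) * F n <= F (S n).
Proof.
  pose proof omega_lt_sig; assert (0 < sig) by lra; pose proof a_nonneg; pose proof V_nonneg.
  pose proof (F_nonneg n); pose proof M_le_V; pose proof (Rmax_l cstar D).
  rewrite F_succ.
  assert (HK : LZ * cstar + LC * a <= K).
  { apply (Rmult_le_reg_r (sig - omega)); [lra|].
    rewrite K_mul; unfold W.
    assert (LZ * cstar <= LZ * V) by (apply Rmult_le_compat_l; unfold M in *; lra).
    assert (0 <= LC * a) by (apply Rmult_le_pos; lra).
    assert (0 <= LZ * cstar) by (apply Rmult_le_pos; lra).
    nra. }
  assert (Hr : LC * (1 + omega) <= r).
  { apply (Rmult_le_reg_r (sig - omega)); [lra|].
    rewrite r_mul.
    assert (0 <= LC * omega) by (apply Rmult_le_pos; lra).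
    nra. }
  assert (LC * (1 + omega) * F n <= r * F n) by (apply Rmult_le_compat_r; lra).
  lra.
Qed.

Lemma F_succ_ge_second n :
  (a * (1 + LC * sig) + LC * sig * (1 + omega) * F n + LZ * (1 + sig) * V)
    / (sig - omega) <= F (S n).
Proof.
  pose proof omega_lt_sig; assert (0 < sig) by lra; pose proof V_nonneg; pose proof (F_nonneg n).
  rewrite F_succ.
  apply (Rmult_le_reg_r (sig - omega)); [lra|].
  unfold Rdiv; rewrite Rmult_assoc, Rinv_l, Rmult_1_r by lra.
  replace ((K + r * F n) * (sig - omega)) with (K * (sig - omega) + r * (sig - omega) * F n)
    by ring.
  rewrite K_mul, r_mul; unfold W.
  assert (0 <= LC * sig * F n) by (apply Rmult_le_pos; [apply Rmult_le_pos|]; lra).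
  assert (0 <= LZ * V) by (apply Rmult_le_pos; lra).
  nra.
Qed.

Lemma F_mono k n : (k <= n)%nat -> F k <= F n.
Proof.
  intros Hkn; rewrite !F_closed_form; pose proof K_nonneg; pose proof r_nonneg.
  apply Rmult_le_compat_l; [assumption|].
  apply rsum_le_more_terms; [intros j; apply pow_le; assumption | exact Hkn].
Qed.

Lemma weighted_sum_F_le :
  omega * rsum Rn (fun k => F (S k)) <= t * Rr * ps * W / (1 - t).
Proof.
  destruct x_le_t_lt_1 as [[Hx Hxt] Ht].
  assert (0 < sig) by lra; pose proof K_nonneg; pose proof omega_lt_sig.
  assert (HsumF : rsum Rn (fun k => F (S k)) <= Rr * F Rn).
  { unfold Rr; rewrite <- rsum_const; apply rsum_le; intros k Hk; apply F_mono; lia. }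
  assert (Hgeom : F Rn <= K * (Rr * (ps * (1 - x) / (1 - t)))).
  { rewrite F_closed_form; apply Rmult_le_compat_l; [assumption|].
    apply geom_sum_le_psi; assumption. }
  (* omega K (1-x) = x W, since sigma - omega = sigma (1-x) *)
  assert (HKx : omega * K * (1 - x) = x * W).
  { rewrite <- K_mul; unfold x; field; lra. }
  apply Rle_trans with (omega * (Rr * (K * (Rr * (ps * (1 - x) / (1 - t)))))).
  - apply Rmult_le_compat_l; [assumption|].
    eapply Rle_trans; [exact HsumF|].
    apply Rmult_le_compat_l; [unfold Rr; apply pos_INR | exact Hgeom].
  - right.
    replace (omega * (Rr * (K * (Rr * (ps * (1 - x) / (1 - t))))))
      with (Rr * Rr * ps * (omega * K * (1 - x)) / (1 - t)) by (field; lra).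
    rewrite HKx; unfold Rdiv; f_equal; unfold t; ring.
Qed.

Lemma V_ge_bound :
  V >= Rmax D ((sqrt (INR m * INR d) * Rr * eta0 + omega * rsum Rn (fun k => F (S k)))
                 / (sig - lam) * LAtilde LA LC Rn).
Proof.
  destruct x_le_t_lt_1 as [[Hx Hxt] Ht].
  pose proof M_le_V; pose proof (Rmax_r cstar D); pose proof u_nonneg; pose proof a_nonneg.
  pose proof (LAtilde_le LA LC Rn HLA HLC) as HLt.
  pose proof weighted_sum_F_le as HsumF.
  assert (0 <= omega * rsum Rn (fun k => F (S k)))
    by (apply Rmult_le_pos; [lra | apply rsum_nonneg; intros; apply F_nonneg]).
  assert (HRr : 0 <= Rr) by apply pos_INR.
  assert (0 <= LAtilde LA LC Rn)
    by (unfold LAtilde; apply Rmult_le_pos; [lra | apply rsum_nonneg; intros; apply pow_le; lra]).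
  apply Rle_ge, Rmax_lub; [unfold M in *; lra|].
  assert (0 < / (sig - lam)) by (apply Rinv_0_lt_compat; lra).
  replace ((sqrt (INR m * INR d) * Rr * eta0 + omega * rsum Rn (fun k => F (S k)))
             / (sig - lam) * LAtilde LA LC Rn)
    with (/ (sig - lam) * LAtilde LA LC Rn * (a * Rr + omega * rsum Rn (fun k => F (S k))))
    by (unfold a, Rdiv; ring).
  eapply Rle_trans; [|apply V_dominates_fixed_point].
  replace (u * Rr * ps * (a * Rr + t * Rr * ps * W / (1 - t)))
    with (/ (sig - lam) * (LA * (Rr * ps)) * (a * Rr + t * Rr * ps * W / (1 - t)))
    by (unfold u, Rdiv; ring).
  apply Rmult_le_compat; [apply Rmult_le_pos; lra | nra | |].
  - apply Rmult_le_compat_l; [lra | exact HLt].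
  - lra.
Qed.

End Lemma4_bounds.

Theorem lemma4 (m d Rn : nat) (lam sig LA LC LZ eta0 cstar D omega : R) :
  (1 <= m)%nat -> (1 <= d)%nat -> (1 <= Rn)%nat ->
  0 < lam -> lam < sig -> sig < 1 ->
  0 <= LA -> 0 <= LC -> 0 <= LZ ->
  0 < eta0 -> 0 <= cstar -> 0 <= D ->
  0 <= omega -> omega < omega_bar Rn lam sig LA LC LZ ->
  let V := V0 m d Rn lam sig LA LC LZ eta0 cstar D omega in
  let F := Fs m d Rn lam sig LA LC LZ eta0 cstar D omega in
  let smd := sqrt (INR m * INR d) in
  V >= Rmax D ((smd * INR Rn * eta0 + omega * rsum Rn (fun k => F (S k)))
                 / (sig - lam) * LAtilde LA LC Rn)
  /\ (forall s : nat, (1 <= s <= Rn)%nat ->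
      F s >= Rmax (LZ * cstar + LC * smd * eta0 + LC * (1 + omega) * F (s - 1)%nat)
                  ((smd * eta0 * (1 + LC * sig) + LC * sig * (1 + omega) * F (s - 1)%nat
                    + LZ * (1 + sig) * V) / (sig - omega))).
Proof.
  intros _ _ HR Hlam Hlam_sig Hsig1 HLA HLC HLZ Heta Hcstar HD Homega Homega_bar V F smd.
  apply Rlt_le in Heta.
  split.
  - apply V_ge_bound; assumption.
  - intros [|s] Hs; [lia|].
    replace (S s - 1)%nat with s by lia.
    apply Rle_ge, Rmax_lub.
    + rewrite (Rmult_assoc LC).
      apply F_succ_ge_first; assumption.
    + apply F_succ_ge_second; assumption.
Qed.
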